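(* Let $\mathsf{V}$ be the subvariety of $V(\mathsf{BCA})$ axiomatised, relative to $V(\mathsf{BCA})$, by $J_2\neg x\approx\neg J_2x$. Then every $\mathbf{A}\in\mathsf{V}$ embeds into a direct product $\mathbf{B}\times\mathbf{C}$ for some $\mathbf{B}\in\mathsf{BA}$ and some $\mathbf{C}\in\mathsf{SL}$.
   Context: $\mathbf{WK}^e$ is the three-element algebra on $\{0,\tfrac12,1\}$ of type $\langle\wedge,\vee,\neg,J_2,0,1\rangle$. Its operations are: - $\neg$ swaps $0,1$ and fixes $\tfrac12$; - $\wedge,\vee$ are Boolean on $\{0,1\}$ and return $\tfrac12$ if some argument is $\tfrac12$; - $J_2(1)=1$ and $J_2(\tfrac12)=J_2(0)=0$. $\mathsf{BCA}=ISP(\mathbf{WK}^e)$ and $V(\mathsf{BCA})=HSP(\mathbf{WK}^e)$. $\mathsf{BA}$ is the subvariety of $V(\mathsf{BCA})$ axiomatised relative to it by $J_2x\approx x$. $\mathsf{SL}$ is the subvariety axiomatised relative to it by $J_2x\approx1$. *)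

Inductive wk : Type := W0 | Wh | W1.

Definition wk_neg (x : wk) : wk :=
  match x with W0 => W1 | Wh => Wh | W1 => W0 end.

Definition wk_meet (x y : wk) : wk :=
  match x, y with
  | Wh, _ => Wh | _, Wh => Wh
  | W1, W1 => W1
  | _, _ => W0
  end.

Definition wk_join (x y : wk) : wk :=
  match x, y with
  | Wh, _ => Wh | _, Wh => Wh
  | W0, W0 => W0
  | _, _ => W1
  end.

Definition wk_J2 (x : wk) : wk :=
  match x with W1 => W1 | _ => W0 end.

Record alg : Type := Alg {
  car :> Type;
  a_meet : car -> car -> car;
  a_join : car -> car -> car;
  a_neg : car -> car;
  a_J2 : car -> car;
  a_zero : car;
  a_one : car }.

Definition WKe : alg := Alg wk wk_meet wk_join wk_neg wk_J2 W0 W1.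

Definition is_hom (A B : alg) (h : A -> B) : Prop :=
  (forall x y, h (a_meet A x y) = a_meet B (h x) (h y)) /\
  (forall x y, h (a_join A x y) = a_join B (h x) (h y)) /\
  (forall x, h (a_neg A x) = a_neg B (h x)) /\
  (forall x, h (a_J2 A x) = a_J2 B (h x)) /\
  h (a_zero A) = a_zero B /\
  h (a_one A) = a_one B.

Definition embeds (A B : alg) : Prop :=
  exists h : A -> B, is_hom A B h /\ (forall x y, h x = h y -> x = y).

Definition prod_alg (B C : alg) : alg :=
  Alg (B * C)%type
    (fun x y => (a_meet B (fst x) (fst y), a_meet C (snd x) (snd y)))
    (fun x y => (a_join B (fst x) (fst y), a_join C (snd x) (snd y)))
    (fun x => (a_neg B (fst x), a_neg C (snd x)))
    (fun x => (a_J2 B (fst x), a_J2 C (snd x)))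
    (a_zero B, a_zero C)
    (a_one B, a_one C).

Definition wk_power (I : Type) : alg :=
  Alg (I -> wk)
    (fun f g i => wk_meet (f i) (g i))
    (fun f g i => wk_join (f i) (g i))
    (fun f i => wk_neg (f i))
    (fun f i => wk_J2 (f i))
    (fun _ => W0)
    (fun _ => W1).

(* A ∈ HSP(WK^e) = V(BCA): there are a set I, a subuniverse S of (WK^e)^I
   and a surjective homomorphism from the subalgebra on S onto A
   (represented as a map on the whole power that is a homomorphism on S). *)
Definition in_VBCA (A : alg) : Prop :=
  exists (I : Type) (S : (I -> wk) -> Prop) (h : (I -> wk) -> A),
    (forall f g, S f -> S g -> S (a_meet (wk_power I) f g)) /\
    (forall f g, S f -> S g -> S (a_join (wk_power I) f g)) /\
    (forall f, S f -> S (a_neg (wk_power I) f)) /\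
    (forall f, S f -> S (a_J2 (wk_power I) f)) /\
    S (a_zero (wk_power I)) /\
    S (a_one (wk_power I)) /\
    (forall f g, S f -> S g ->
       h (a_meet (wk_power I) f g) = a_meet A (h f) (h g)) /\
    (forall f g, S f -> S g ->
       h (a_join (wk_power I) f g) = a_join A (h f) (h g)) /\
    (forall f, S f -> h (a_neg (wk_power I) f) = a_neg A (h f)) /\
    (forall f, S f -> h (a_J2 (wk_power I) f) = a_J2 A (h f)) /\
    h (a_zero (wk_power I)) = a_zero A /\
    h (a_one (wk_power I)) = a_one A /\
    (forall a : A, exists f, S f /\ h f = a).

Definition in_BA (A : alg) : Prop :=
  in_VBCA A /\ forall x : A, a_J2 A x = x.

Definition in_SL (A : alg) : Prop :=
  in_VBCA A /\ forall x : A, a_J2 A x = a_one A.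

Definition in_V (A : alg) : Prop :=
  in_VBCA A /\ forall x : A, a_J2 A (a_neg A x) = a_neg A (a_J2 A x).

(* An idempotent term operation [p] of [A] whose kernel is a congruence
   turns its set of fixed points into a homomorphic image of [A], with the
   operations [p ∘ op].  For [p = J2] the kernel is a congruence exactly because
   of the identity [J2 ¬x = ¬J2 x] (it makes [J2] preserve joins), and the image
   satisfies [J2 x = x]; for [p x = 1 ∨ x] the image satisfies [J2 x = 1].
   Every identity of WK^e holds in [A], and [x = J2 x ∨ ((1 ∨ x) ∧ 0)] holds in
   WK^e, so the pair of retractions is injective. *)

From Stdlib Require Import FunctionalExtensionality ProofIrrelevance.

Inductive term2 : Type :=
  | Tx | Ty | Tzero | Tone
  | Tmeet (s t : term2) | Tjoin (s t : term2) | Tneg (s : term2) | TJ2 (s : term2).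

Fixpoint eval2 (A : alg) (x y : A) (t : term2) : A :=
  match t with
  | Tx => x
  | Ty => y
  | Tzero => a_zero A
  | Tone => a_one A
  | Tmeet s u => a_meet A (eval2 A x y s) (eval2 A x y u)
  | Tjoin s u => a_join A (eval2 A x y s) (eval2 A x y u)
  | Tneg s => a_neg A (eval2 A x y s)
  | TJ2 s => a_J2 A (eval2 A x y s)
  end.

Lemma eval2_power (I : Type) (f g : I -> wk) (t : term2) (i : I) :
  eval2 (wk_power I) f g t i = eval2 WKe (f i) (g i) t.
Proof.
  induction t; simpl; try reflexivity.
  - rewrite IHt1, IHt2; reflexivity.
  - rewrite IHt1, IHt2; reflexivity.
  - rewrite IHt; reflexivity.
  - rewrite IHt; reflexivity.
Qed.

Lemma in_VBCA_identity (A : alg) (t1 t2 : term2) :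
  in_VBCA A ->
  (forall u v : wk, eval2 WKe u v t1 = eval2 WKe u v t2) ->
  forall x y : A, eval2 A x y t1 = eval2 A x y t2.
Proof.
  intros (I & S & h & Sm & Sj & Sn & SJ & S0 & S1 & hm & hj & hn & hJ & h0 & h1 & hs)
         Hwk x y.
  destruct (hs x) as (f & Sf & <-). destruct (hs y) as (g & Sg & <-).
  assert (lift : forall t, S (eval2 (wk_power I) f g t) /\
                           h (eval2 (wk_power I) f g t) = eval2 A (h f) (h g) t).
  { induction t; cbn [eval2]; try tauto.
    - split; [apply Sm; tauto |]. rewrite hm by tauto. f_equal; tauto.
    - split; [apply Sj; tauto |]. rewrite hj by tauto. f_equal; tauto.
    - split; [apply Sn; tauto |]. rewrite hn by tauto. f_equal; tauto.
    - split; [apply SJ; tauto |]. rewrite hJ by tauto. f_equal; tauto. }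
  rewrite <- (proj2 (lift t1)), <- (proj2 (lift t2)). f_equal.
  apply functional_extensionality; intro i.
  rewrite !eval2_power. apply Hwk.
Qed.

Ltac reify2 A x y t :=
  lazymatch constr:((t, x, y)) with
  | (?a, ?a, _) => constr:(Tx)
  | (?a, _, ?a) => constr:(Ty)
  | _ =>
    lazymatch t with
    | a_meet A ?s ?u =>
        let s' := reify2 A x y s in let u' := reify2 A x y u in constr:(Tmeet s' u')
    | a_join A ?s ?u =>
        let s' := reify2 A x y s in let u' := reify2 A x y u in constr:(Tjoin s' u')
    | a_neg A ?s => let s' := reify2 A x y s in constr:(Tneg s')
    | a_J2 A ?s => let s' := reify2 A x y s in constr:(TJ2 s')
    | a_zero A => constr:(Tzero)
    | a_one A => constr:(Tone)
    end
  end.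

(* Closes an equation in [A] between terms in [x] and [y] (or only [x], calling
   it with [x x]) that is an identity of WK^e, by checking all nine valuations. *)
Ltac wk_identity A HA x y :=
  lazymatch goal with
  | |- ?l = ?r =>
    let l' := reify2 A x y l in
    let r' := reify2 A x y r in
    exact (in_VBCA_identity A l' r' HA ltac:(intros [] []; reflexivity) x y)
  end.

Lemma in_VBCA_hom_image (A D : alg) (phi : A -> D) :
  in_VBCA A -> is_hom A D phi -> (forall d, exists a, phi a = d) -> in_VBCA D.
Proof.
  intros (I & S & h & Sm & Sj & Sn & SJ & S0 & S1 & hm & hj & hn & hJ & h0 & h1 & hs)
         (pm & pj & pn & pJ & p0 & p1) phi_onto.
  exists I, S, (fun f => phi (h f)).
  repeat split; auto.
  - intros f g Sf Sg. rewrite hm by auto. auto.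
  - intros f g Sf Sg. rewrite hj by auto. auto.
  - intros f Sf. rewrite hn by auto. auto.
  - intros f Sf. rewrite hJ by auto. auto.
  - rewrite h0. auto.
  - rewrite h1. auto.
  - intro d. destruct (phi_onto d) as (a & <-). destruct (hs a) as (f & Sf & <-).
    eauto.
Qed.

Lemma is_hom_pair (A B C : alg) (f : A -> B) (g : A -> C) :
  is_hom A B f -> is_hom A C g -> is_hom A (prod_alg B C) (fun x => (f x, g x)).
Proof.
  intros (fm & fj & fn & fJ & f0 & f1) (gm & gj & gn & gJ & g0 & g1).
  repeat split; intros; simpl; f_equal; auto.
Qed.

(* The kernel of [p] is a congruence of [A]. *)
Record compatible (A : alg) (p : A -> A) : Prop := {
  compatible_meet : forall x y, p (a_meet A x y) = p (a_meet A (p x) (p y));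
  compatible_join : forall x y, p (a_join A x y) = p (a_join A (p x) (p y));
  compatible_neg : forall x, p (a_neg A x) = p (a_neg A (p x));
  compatible_J2 : forall x, p (a_J2 A x) = p (a_J2 A (p x)) }.

Section Retract.

Variables (A : alg) (p : A -> A).
Hypothesis p_idem : forall x, p (p x) = p x.

Definition retr (x : A) : {x : A | p x = x} := exist _ (p x) (p_idem x).

Definition retract_alg : alg :=
  Alg {x : A | p x = x}
    (fun x y => retr (a_meet A (proj1_sig x) (proj1_sig y)))
    (fun x y => retr (a_join A (proj1_sig x) (proj1_sig y)))
    (fun x => retr (a_neg A (proj1_sig x)))
    (fun x => retr (a_J2 A (proj1_sig x)))
    (retr (a_zero A))
    (retr (a_one A)).

Lemma retract_ext (a b : retract_alg) : proj1_sig a = proj1_sig b -> a = b.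
Proof. apply eq_sig_hprop. intros; apply proof_irrelevance. Qed.

Lemma retr_onto (d : retract_alg) : exists a, retr a = d.
Proof. exists (proj1_sig d). apply retract_ext. exact (proj2_sig d). Qed.

Lemma retr_hom : compatible A p -> is_hom A retract_alg retr.
Proof.
  intros [cm cj cn cJ].
  repeat split; intros; apply retract_ext; simpl; auto.
Qed.

Lemma retract_in_VBCA : in_VBCA A -> compatible A p -> in_VBCA retract_alg.
Proof.
  intros HA Hp. exact (in_VBCA_hom_image A retract_alg retr HA (retr_hom Hp) retr_onto).
Qed.

End Retract.

Section Decomposition.

Variable A : alg.
Hypothesis HA : in_VBCA A.

Lemma J2_idem (x : A) : a_J2 A (a_J2 A x) = a_J2 A x.
Proof. wk_identity A HA x x. Qed.

Lemma one_join_idem (x : A) :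
  a_join A (a_one A) (a_join A (a_one A) x) = a_join A (a_one A) x.
Proof. wk_identity A HA x x. Qed.

Lemma J2_join (HV : forall x : A, a_J2 A (a_neg A x) = a_neg A (a_J2 A x)) (x y : A) :
  a_J2 A (a_join A x y) = a_join A (a_J2 A x) (a_J2 A y).
Proof.
  assert (de_morgan : a_join A x y = a_neg A (a_meet A (a_neg A x) (a_neg A y)))
    by wk_identity A HA x y.
  assert (J2_meet : a_J2 A (a_meet A (a_neg A x) (a_neg A y)) =
                    a_meet A (a_J2 A (a_neg A x)) (a_J2 A (a_neg A y)))
    by wk_identity A HA x y.
  rewrite de_morgan, HV, J2_meet, !HV.
  wk_identity A HA x y.
Qed.

Lemma J2_compatible (HV : forall x : A, a_J2 A (a_neg A x) = a_neg A (a_J2 A x)) :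
  compatible A (a_J2 A).
Proof.
  split; intros.
  - wk_identity A HA x y.
  - rewrite !J2_join by exact HV. wk_identity A HA x y.
  - rewrite !HV. wk_identity A HA x x.
  - rewrite !J2_idem. reflexivity.
Qed.

Lemma one_join_compatible : compatible A (a_join A (a_one A)).
Proof.
  split; intros.
  - wk_identity A HA x y.
  - wk_identity A HA x y.
  - wk_identity A HA x x.
  - wk_identity A HA x x.
Qed.

Definition boolean_part : alg := retract_alg A (a_J2 A) J2_idem.

Definition semilattice_part : alg := retract_alg A (a_join A (a_one A)) one_join_idem.

Lemma boolean_part_in_BA (HV : forall x : A, a_J2 A (a_neg A x) = a_neg A (a_J2 A x)) :
  in_BA boolean_part.
Proof.
  split.
  - exact (retract_in_VBCA _ _ _ HA (J2_compatible HV)).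
  - intro x. apply retract_ext. simpl. rewrite !(proj2_sig x). reflexivity.
Qed.

Lemma semilattice_part_in_SL : in_SL semilattice_part.
Proof.
  split.
  - exact (retract_in_VBCA _ _ _ HA one_join_compatible).
  - intro x. apply retract_ext. simpl.
    set (z := proj1_sig x). wk_identity A HA z z.
Qed.

Lemma J2_one_join_decomposition (x : A) :
  x = a_join A (a_J2 A x) (a_meet A (a_join A (a_one A) x) (a_zero A)).
Proof. wk_identity A HA x x. Qed.

Lemma retr_pair_injective (x y : A) :
  (retr _ _ J2_idem x, retr _ _ one_join_idem x) =
  (retr _ _ J2_idem y, retr _ _ one_join_idem y) -> x = y.
Proof.
  intro E. injection E as EJ EO.
  rewrite (J2_one_join_decomposition x), (J2_one_join_decomposition y), EJ, EO.
  reflexivity.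
Qed.

End Decomposition.

Theorem theorem4p13 (A : alg) :
  in_V A ->
  exists B C : alg, in_BA B /\ in_SL C /\ embeds A (prod_alg B C).
Proof.
  intros [HA HV].
  exists (boolean_part A HA), (semilattice_part A HA).
  split; [exact (boolean_part_in_BA A HA HV) |].
  split; [exact (semilattice_part_in_SL A HA) |].
  exists (fun x => (retr _ _ (J2_idem A HA) x, retr _ _ (one_join_idem A HA) x)).
  split.
  - apply is_hom_pair; apply retr_hom.
    + exact (J2_compatible A HA HV).
    + exact (one_join_compatible A HA).
  - exact (retr_pair_injective A HA).
Qed.
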